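(* Let $\mathbf d=(d_1,\ldots,d_n)$ be a degree sequence and $v\in[n]$ such that $\mathbb P(\mathfrak t_n(v)>0)>0$ (equivalently, $d_w>1$ for some $w\ne v$). Then for every $k\ge2$ with $\mathbb P(\mathfrak s_n(v)=k,\mathfrak t_n(v)>0)>0$, \[\mathbb P\big(\mathfrak t_n(v)=j\,\big|\,\mathfrak s_n(v)=k,\ \mathfrak t_n(v)>0\big)=\frac{1}{k-1},\qquad j\in[k-1].\]
   Context: A degree sequence is $\mathbf d=(d_1,\ldots,d_n)\in\mathbb N_0^n$ with $\sum_j d_j=n$. Let $\mathfrak F(\mathbf d)=\{f:[n]\to[n]: |f^{-1}(\{i\})|=d_i\ \forall i\}$ and $F$ uniform on $\mathfrak F(\mathbf d)$. For $f:V\to V$, $v\in V$: six-length $\mathfrak s_f(v)=\min\{k\in\mathbb N: f^{(k)}(v)\in\{f^{(j)}(v):0\le j\le k-1\}\}$ ($f^{(k)}$ the $k$-fold composition, $f^{(0)}=\mathrm{id}$); tail-length $\mathfrak t_f(v)$ is the unique integer with $0\le\mathfrak t_f(v)<\mathfrak s_f(v)$ and $f^{(\mathfrak s_f(v))}(v)=f^{(\mathfrak t_f(v))}(v)$. $\mathfrak s_n(v)=\mathfrak s_F(v)$, $\mathfrak t_n(v)=\mathfrak t_F(v)$. *)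

From mathcomp Require Import all_boot all_order all_algebra.
Set Implicit Arguments. Unset Strict Implicit. Unset Printing Implicit Defensive.
Import GRing.Theory Num.Theory.

Definition six_pred (T : finType) (f : T -> T) (v : T) : pred nat :=
  fun k => (0 < k) && (iter k f v \in [seq iter j f v | j <- iota 0 k]).

Lemma six_pred_ex (T : finType) (f : T -> T) (v : T) : exists k, six_pred f v k.
Proof.
exists (order f v); rewrite /six_pred order_gt0 /=.
have := looping_order f v; rewrite /looping.
suff -> : forall m x, traject f x m = [seq iter j f x | j <- iota 0 m] by [].
move=> m0 x0; elim: m0 x0 => [|m IH] x //=.
rewrite IH -(addn0 1) iotaDl -map_comp; congr (_ :: _); apply: eq_map => j /=.
by rewrite -iterSr.
Qed.

Definition sixlen (T : finType) (f : T -> T) (v : T) : nat := ex_minn (six_pred_ex f v).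

Definition taillen (T : finType) (f : T -> T) (v : T) : nat :=
  index (iter (sixlen f v) f v) [seq iter j f v | j <- iota 0 (sixlen f v)].

(* the set F(d) of maps [n] -> [n] with in-degree sequence d *)
Definition Fd (n : nat) (d : 'I_n -> nat) : {set {ffun 'I_n -> 'I_n}} :=
  [set f : {ffun 'I_n -> 'I_n} | [forall i, #|[set x | f x == i]| == d i]].

Definition prob (n : nat) (d : 'I_n -> nat) (E : pred {ffun 'I_n -> 'I_n}) : rat :=
  (#|[set f in Fd d | E f]|%:R / #|Fd d|%:R)%R.

Definition condprob (n : nat) (d : 'I_n -> nat) (A B : pred {ffun 'I_n -> 'I_n}) : rat :=
  (prob d (fun f => A f && B f) / prob d B)%R.

(** Right-composing f with the 3-cycle (v, f v, f^(s-1) v) preserves every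
    in-degree and turns the f-path v, f v, ..., f^(s-1) v into the path
    v, f^2 v, ..., f^(s-1) v, f v: the six-length s is unchanged and the
    tail-length drops by one, cyclically on [1, s-1].  The 3-cycle can be
    read off the shifted path, so the map is injective on maps of six-length
    s, and the numbers of maps in F(d) with six-length k and tail-length t
    are nonincreasing along the cycle k-1 -> ... -> 1 -> k-1, hence equal. *)
From mathcomp Require Import all_boot all_order all_algebra.
From mathcomp Require Import all_fingroup zify ring.
Import GRing.Theory Num.Theory.
Set Implicit Arguments. Unset Strict Implicit.

Section SixTail.
Variables (T : finType) (f : T -> T) (v : T).

Let path_of k := [seq iter i f v | i <- iota 0 k].

Lemma size_path_of k : size (path_of k) = k.
Proof. by rewrite size_map size_iota. Qed.

Lemma iter_uniq_inj k i j : uniq (path_of k) -> i < k -> j < k ->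
  iter i f v = iter j f v -> i = j.
Proof.
move=> U ik jk E; apply/eqP.
have := @nth_uniq _ v (path_of k) i j; rewrite size_path_of => /(_ ik jk U) <-.
by rewrite !(nth_map 0) ?size_iota // !nth_iota // E.
Qed.

Lemma sixlen_spec :
  [/\ uniq (path_of (sixlen f v)), taillen f v < sixlen f v
    & iter (sixlen f v) f v = iter (taillen f v) f v].
Proof.
rewrite /taillen /sixlen; case: ex_minnP => k /andP[_ Hin] Hmin.
have U : uniq (path_of k).
  rewrite map_inj_in_uniq ?iota_uniq // => i j; rewrite !mem_iota /= => ik jk E.
  wlog lt_ij : i j ik jk E / i < j.
    move=> W; case: (ltngtP i j) => [h|h|//]; first exact: W.
    by apply/esym; apply: W.
  have : six_pred f v j.
    by rewrite /six_pred (leq_ltn_trans _ lt_ij) //= -E; apply: map_f; rewrite mem_iota.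
  by move/Hmin; rewrite leqNgt jk.
have idx_lt : index (iter k f v) (path_of k) < k.
  by rewrite -[X in _ < X]size_path_of index_mem.
split=> //; rewrite -[in LHS](nth_index v Hin) (nth_map 0) ?nth_iota //.
by rewrite size_iota.
Qed.

Lemma sixlen_taillen_eq k t :
  t < k -> uniq (path_of k) -> iter k f v = iter t f v ->
  sixlen f v = k /\ taillen f v = t.
Proof.
move=> tk U E.
have Pk : six_pred f v k.
  by rewrite /six_pred (leq_ltn_trans _ tk) //= E; apply: map_f; rewrite mem_iota.
have sk : sixlen f v = k.
  rewrite /sixlen; case: ex_minnP => m /andP[_ /mapP[i]].
  rewrite mem_iota add0n => /andP[_ im] Ei Hmin; have mk := Hmin _ Pk.
  by case: ltngtP mk => // mk _; have := iter_uniq_inj U (ltn_trans im mk) mk (esym Ei); lia.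
split=> //; rewrite /taillen sk E.
have -> : iter t f v = nth v (path_of k) t by rewrite (nth_map 0) ?size_iota ?nth_iota.
by rewrite index_uniq ?size_path_of.
Qed.

Lemma iter_sixlen_neq i j : i < sixlen f v -> j < sixlen f v -> i != j ->
  iter i f v != iter j f v.
Proof.
have [U _ _] := sixlen_spec.
by move=> ik jk; apply/contra_neq => /(iter_uniq_inj U ik jk).
Qed.

End SixTail.

(* The i-th point of the (tail_shift f)-path from v is the
   (shift_index k i)-th point of the f-path, where k is the six-length. *)
Definition shift_index k i := if i == 0 then 0 else if i == k.-1 then 1 else i.+1.

Lemma shift_index_lt k i : 2 <= k -> i < k -> shift_index k i < k.
Proof. by rewrite /shift_index => k2 ik; case: eqVneq => ?; [|case: eqVneq => ?]; lia. Qed.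

Lemma shift_index_inj k i j : 2 <= k -> i < k -> j < k ->
  shift_index k i = shift_index k j -> i = j.
Proof.
rewrite /shift_index => k2 ik jk.
by case: (eqVneq i 0) => ?; case: (eqVneq i k.-1) => ?;
   case: (eqVneq j 0) => ?; case: (eqVneq j k.-1) => ?; lia.
Qed.

Lemma shift_index_tail_pred k t : 2 <= k -> 0 < t < k ->
  shift_index k (if t == 1 then k.-1 else t.-1) = t.
Proof.
rewrite /shift_index => k2 tk; case: (eqVneq t 1) => [-> | t1].
  by rewrite ifF ?eqxx //; lia.
by rewrite !ifF; lia.
Qed.

Section TailShift.
Variables (T : finType) (v : T).

Definition tail_shift (f : {ffun T -> T}) : {ffun T -> T} :=
  [ffun x => f (tperm v (iter (sixlen f v).-1 f v) (tperm v (f v) x))].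

Lemma tail_shiftE f x :
  tail_shift f x = f (tperm v (iter (sixlen f v).-1 f v) (tperm v (f v) x)).
Proof. by rewrite ffunE. Qed.

Lemma card_preim_tail_shift f i :
  #|[set x | tail_shift f x == i]| = #|[set x | f x == i]|.
Proof.
have sigma_inj : injective (tperm v (iter (sixlen f v).-1 f v) \o tperm v (f v)).
  by apply: inj_comp; apply: perm_inj.
rewrite -[RHS](card_preimset _ sigma_inj); apply: eq_card => x.
by rewrite !inE tail_shiftE.
Qed.

Section ShiftedPath.
Variable f : {ffun T -> T}.
Hypothesis k2 : 2 <= sixlen f v.
Let k := sixlen f v.
Let t := taillen f v.

Lemma tail_shift_f : tail_shift f (f v) = iter t f v.
Proof.
have [_ _ E] := sixlen_spec f v.
by rewrite tail_shiftE tpermR tpermL -iterS prednK ?E //; lia.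
Qed.

Let neq := @iter_sixlen_neq _ f v.

Lemma tail_shift_v : tail_shift f v = iter (shift_index k 1) f v.
Proof.
rewrite /shift_index tail_shiftE tpermL /=.
case: eqVneq => [k2E | k3]; first by rewrite -k2E tpermR.
by rewrite tpermD //; [apply: (@neq 0 1) | rewrite eq_sym; apply: (@neq 1)]; lia.
Qed.

Lemma tail_shift_mid i : 1 < i < k.-1 -> tail_shift f (iter i f v) = iter i.+1 f v.
Proof.
by move=> ?; rewrite tail_shiftE !tpermD //; first [apply: (@neq 0) | apply: (@neq 1 i) |
  rewrite eq_sym; apply: (@neq _ k.-1)]; lia.
Qed.

Lemma tail_shift_last : 2 < k -> tail_shift f (iter k.-1 f v) = f v.
Proof.
by move=> ?; rewrite tail_shiftE (@tpermD _ _ _ (iter k.-1 f v)) ?tpermR //;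
  [apply: (@neq 0) | apply: (@neq 1 k.-1)]; lia.
Qed.

Lemma iter_tail_shift i : i < k -> iter i (tail_shift f) v = iter (shift_index k i) f v.
Proof.
elim: i => [|i IH] ik //; rewrite iterS IH; last lia.
case: (posnP i) => [-> | i0]; first exact: tail_shift_v.
rewrite {1}/shift_index; have -> : (i == 0) = false by lia.
have -> : (i == k.-1) = false by lia.
case: (eqVneq i.+1 k.-1) => [e | ne].
  have k1 : (k.-1 == 0) = false by lia.
  by rewrite e tail_shift_last /shift_index ?k1 ?eqxx //; lia.
have -> : shift_index k i.+1 = i.+2 by rewrite /shift_index (negbTE ne); case: eqVneq => //; lia.
by rewrite tail_shift_mid //; lia.
Qed.

Lemma iter_sixlen_tail_shift : iter k (tail_shift f) v = iter t f v.
Proof.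
have kS : k = k.-1.+1 by lia.
rewrite {1}kS iterS iter_tail_shift; last lia.
by rewrite /shift_index; case: eqVneq; [lia | rewrite eqxx tail_shift_f].
Qed.

Lemma sixlen_taillen_tail_shift : 0 < t ->
  sixlen (tail_shift f) v = k /\ taillen (tail_shift f) v = if t == 1 then k.-1 else t.-1.
Proof.
move=> t0; have [_ tk _] := sixlen_spec f v.
have t'k : (if t == 1 then k.-1 else t.-1) < k by case: eqVneq; lia.
apply: sixlen_taillen_eq => //.
  have [U _ _] := sixlen_spec f v.
  have -> : [seq iter i (tail_shift f) v | i <- iota 0 k] =
            [seq iter (shift_index k i) f v | i <- iota 0 k].
    by apply/eq_in_map => i; rewrite mem_iota => /andP[_ ik]; apply: iter_tail_shift.
  rewrite map_inj_in_uniq ?iota_uniq // => i j; rewrite !mem_iota => /andP[_ ik] /andP[_ jk].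
  by move/(iter_uniq_inj U (shift_index_lt k2 ik) (shift_index_lt k2 jk))/shift_index_inj; apply.
by rewrite iter_sixlen_tail_shift iter_tail_shift // shift_index_tail_pred //; lia.
Qed.

Lemma iter_tail_shift_pred : iter k.-1 (tail_shift f) v = f v.
Proof.
rewrite iter_tail_shift /shift_index ?eqxx; last lia.
by case: eqVneq => //; lia.
Qed.

Lemma iter_tail_shift_pred2 : 2 < k -> iter k.-2 (tail_shift f) v = iter k.-1 f v.
Proof.
move=> k3; rewrite iter_tail_shift /shift_index; last lia.
by rewrite !ifF ?prednK //; lia.
Qed.

End ShiftedPath.

Lemma tail_shift_inj (f1 f2 : {ffun T -> T}) : 2 <= sixlen f1 v ->
  sixlen f2 v = sixlen f1 v -> tail_shift f1 = tail_shift f2 -> f1 = f2.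
Proof.
move=> k2 e12 E; have k2' : 2 <= sixlen f2 v by rewrite e12.
have e1 : f1 v = f2 v.
  by rewrite -(iter_tail_shift_pred k2) -(iter_tail_shift_pred k2') E e12.
have e2 : iter (sixlen f1 v).-1 f1 v = iter (sixlen f2 v).-1 f2 v.
  rewrite e12; case: (ltngtP 2 (sixlen f1 v)) => [k3 | | <-] //=; last lia.
  by rewrite -(iter_tail_shift_pred2 k2) // E -e12 (iter_tail_shift_pred2 k2') // e12.
apply/ffunP => x.
set y := tperm v (f1 v) (tperm v (iter (sixlen f1 v).-1 f1 v) x).
have := congr1 (fun g : {ffun T -> T} => g y) E.
by rewrite !tail_shiftE -e1 -e2 !tpermK.
Qed.

End TailShift.

Definition Fd_st n (d : 'I_n -> nat) (v : 'I_n) k t :=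
  [set f in Fd d | (sixlen f v == k) && (taillen f v == t)].

Lemma tail_shift_Fd n (d : 'I_n -> nat) v f : f \in Fd d -> tail_shift v f \in Fd d.
Proof.
by rewrite !inE => /forallP fd; apply/forallP => i; rewrite card_preim_tail_shift fd.
Qed.

Lemma card_Fd_st_le n (d : 'I_n -> nat) v k t : 2 <= k -> 0 < t < k ->
  #|Fd_st d v k t| <= #|Fd_st d v k (if t == 1 then k.-1 else t.-1)|.
Proof.
move=> k2 tk; rewrite -(@card_in_imset _ _ (tail_shift v)); last first.
  move=> f1 f2; rewrite !inE => /and3P[_ /eqP s1 _] /and3P[_ /eqP s2 _].
  by apply: tail_shift_inj; rewrite ?s1 ?s2.
apply/subset_leq_card/subsetP => _ /imsetP[f + ->]; rewrite inE => /and3P[fd /eqP sk /eqP tt].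
have k2f : 2 <= sixlen f v by rewrite sk.
have t0f : 0 < taillen f v by rewrite tt; case/andP: tk.
have [sE tE] := sixlen_taillen_tail_shift k2f t0f.
by rewrite inE sE tE sk tt !eqxx tail_shift_Fd.
Qed.

Lemma cyclic_noninc_const (c : nat -> nat) k :
  (forall t, 0 < t -> t.+1 < k -> c t.+1 <= c t) -> c 1 <= c k.-1 ->
  forall t, 0 < t < k -> c t = c 1.
Proof.
move=> c_dec c1 t tk.
have noninc : {in [pred s | 0 < s < k] &, {homo c : s s' / s <= s' >-> s' <= s}}.
  apply: homo_leq_in => [//|x y z|s s'|s]; rewrite ?inE.
  - by move=> ? /leq_trans; apply.
  - by move=> ? ? ?; rewrite inE; lia.
  - by case/andP=> ? ? /andP[_ ?]; apply: c_dec.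
apply/eqP; rewrite eqn_leq noninc ?inE //=.
  by apply: leq_trans c1 (noninc _ _ _ _ _); rewrite ?inE; lia.
all: lia.
Qed.

Lemma card_fibers_nat (T : finType) (B : {set T}) (g : T -> nat) m n :
  {in B, forall x, m <= g x < n} ->
  #|B| = \sum_(m <= t < n) #|[set x in B | g x == t]|.
Proof.
move=> gB; under eq_bigr do rewrite -sum1dep_card big_mkcondr /=.
rewrite exchange_big /= -sum1_card; apply: eq_bigr => x xB.
rewrite -big_mkcond sum1_count /index_iota.
under eq_count do rewrite eq_sym.
by rewrite count_uniq_mem ?iota_uniq // mem_iota; case/andP: (gB x xB); lia.
Qed.

Section Counting.
Variables (n : nat) (d : 'I_n -> nat) (v : 'I_n) (k : nat).
Hypothesis k2 : 2 <= k.

Lemma card_Fd_st_const t : 0 < t < k -> #|Fd_st d v k t| = #|Fd_st d v k 1|.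
Proof.
apply: (cyclic_noninc_const (c := fun t => #|Fd_st d v k t|)) => [s s0 sk|].
  have s1 : (s.+1 == 1) = false by lia.
  by have := @card_Fd_st_le _ d v k s.+1 k2; rewrite s1; apply; lia.
by have := @card_Fd_st_le _ d v k 1 k2; rewrite eqxx; apply; lia.
Qed.

Lemma card_sixlen_tail_pos :
  #|[set f in Fd d | (sixlen f v == k) && (0 < taillen f v)]| = k.-1 * #|Fd_st d v k 1|.
Proof.
rewrite (@card_fibers_nat _ _ (fun f : {ffun _ -> _} => taillen f v) 1 k); last first.
  move=> f; rewrite inE => /and3P[_ /eqP <- ->]; by have [] := @sixlen_spec _ f v.
rewrite -[k.-1]subn1 -sum_nat_const_nat big_nat_cond [RHS]big_nat_cond.
apply: eq_bigr => t /andP[tk _]; rewrite -(card_Fd_st_const tk); apply: eq_card => f.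
by rewrite !inE; case: (taillen f v =P t) => [-> | _]; rewrite ?andbF // (andP tk).1 !andbT.
Qed.

End Counting.

Lemma prob_gt0_card n (d : 'I_n -> nat) (E : pred {ffun 'I_n -> 'I_n}) :
  (0 < prob d E)%R -> #|Fd d| != 0 /\ #|[set f in Fd d | E f]| != 0.
Proof.
rewrite /prob => pos; split; apply/eqP => c0; move: pos.
  by rewrite c0 invr0 mulr0 Order.POrderTheory.ltxx.
by rewrite c0 mul0r Order.POrderTheory.ltxx.
Qed.

Theorem lemma3p12 (n : nat) (d : 'I_n -> nat) (v : 'I_n) :
  \sum_(i < n) d i = n ->
  (0 < prob d (fun f => (0 < taillen f v)%N))%R ->
  forall k : nat, 2 <= k ->
  (0 < prob d (fun f => (sixlen f v == k) && (0 < taillen f v)%N))%R ->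
  forall j : nat, 1 <= j <= k.-1 ->
  condprob d (fun f => taillen f v == j)
             (fun f => (sixlen f v == k) && (0 < taillen f v)%N)
  = (1 / (k.-1)%:R)%R.
Proof.
move=> _ _ k k2 /prob_gt0_card[Fd0 B0] j jk.
have jk' : 0 < j < k by lia.
have cardA : #|[set f in Fd d | (taillen f v == j) && ((sixlen f v == k) && (0 < taillen f v))]|
             = #|Fd_st d v k 1|.
  rewrite -(card_Fd_st_const d v k2 jk'); apply: eq_card => f; rewrite !inE.
  by case: (taillen f v =P j) => [-> | _]; rewrite ?andbF // (andP jk').1 andbT.
move: B0; rewrite card_sixlen_tail_pos // muln_eq0 negb_or => /andP[k1 c1].
rewrite /condprob /prob cardA card_sixlen_tail_pos // natrM.
by field; rewrite !pnatr_eq0 Fd0 k1 c1.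
Qed.
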